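(* Let $T$ be an aperiodic invertible measure-preserving transformation of a standard probability space $(X,\mu)$, let $U$ be the unitary operator on $L^2(X,\mu)$ given by $Uf=f\circ T$, and let $\{n_k\}$ be any sequence of positive integers with $n_k\to\infty$. Then $U^{n_k}$ does not converge to the identity $I$ in operator norm, and the Ces\`aro averages $\frac1k\sum_{i=1}^k U^{n_i}$ do not converge to $I$ in operator norm.
   Context: $T$ is aperiodic if the set of periodic points of $T$ has measure zero. *)

From HB Require Import structures.
From mathcomp Require Import all_boot all_order all_algebra.
From mathcomp Require Import all_classical all_reals all_analysis.
Set Implicit Arguments. Unset Strict Implicit. Unset Printing Implicit Defensive.
Import Order.TTheory GRing.Theory Num.Theory.
Local Open Scope classical_set_scope.
Local Open Scope ring_scope.

(* (X, its sigma-algebra) is a standard Borel space: it is Borel-isomorphic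
   to a Borel subset of the real line (Kuratowski). *)
Definition standard_borel d (X : measurableType d) (R : realType) : Prop :=
  exists f : X -> R, injective f /\ measurable_fun setT f /\
    (forall A : set X, measurable A -> measurable (f @` A)).

Definition invertible_mpt d (X : measurableType d) (R : realType)
    (mu : {measure set X -> \bar R}) (T : X -> X) : Prop :=
  measurable_fun setT T /\
  (exists Ti : X -> X, cancel T Ti /\ cancel Ti T /\ measurable_fun setT Ti) /\
  (forall A : set X, measurable A -> mu (T @^-1` A) = mu A).

Definition periodic_points (X : Type) (T : X -> X) : set X :=
  [set x | exists n : nat, (0 < n)%N /\ iter n T x = x].

Definition aperiodic d (X : measurableType d) (R : realType)
    (mu : {measure set X -> \bar R}) (T : X -> X) : Prop :=
  mu.-negligible (periodic_points T).

(* closed unit ball of L^2(X, mu) (real scalars), represented by functions *)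
Definition L2_ball d (X : measurableType d) (R : realType)
    (mu : {measure set X -> \bar R}) : set (X -> R) :=
  [set f | measurable_fun setT f /\ (Lnorm mu 2%:E (EFin \o f) <= 1)%E].

Definition opnorm_dist_id d (X : measurableType d) (R : realType)
    (mu : {measure set X -> \bar R}) (A : (X -> R) -> (X -> R)) : \bar R :=
  ereal_sup [set Lnorm mu 2%:E (EFin \o (A f \- f)) | f in L2_ball mu].

Definition koopman_pow (X : Type) (R : realType) (T : X -> X) (n : nat)
    (f : X -> R) : X -> R := f \o iter n T.

(* Cesaro average (1/k) sum_{i=1}^k U^{n_i}, indexed by k.+1 (k >= 0),
   with the sequence n_1, n_2, ... written as n 0, n 1, ... *)
Definition cesaro_koopman (X : Type) (R : realType) (T : X -> X)
    (n : nat -> nat) (k : nat) (f : X -> R) : X -> R :=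
  fun x => (k.+1%:R)^-1 * \sum_(i < k.+1) koopman_pow T (n i) f x.

From HB Require Import structures.
From mathcomp Require Import all_boot all_order all_algebra.
From mathcomp Require Import all_classical all_reals all_analysis.
From mathcomp Require Import ring lra measurable_realfun.
Set Implicit Arguments. Unset Strict Implicit. Unset Printing Implicit Defensive.
Import Order.TTheory GRing.Theory Num.Theory.
Local Open Scope classical_set_scope.
Local Open Scope ring_scope.

(* Embed X into ]-pi/2, pi/2[ by phi := atan \o f, with f a Borel embedding
   into the reals, and test B := (1/(K+1)) sum_i U^(m_i) on the characters
   e^(i t phi), t = 1, ..., M.
   Pointwise, the sum over t of |B e^(i t phi) - e^(i t phi)|^2 is at least
   M - 2 Re (1/(K+1)) sum_i sum_t e^(i t (phi (T^(m_i) x) - phi x)), and the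
   inner Dirichlet sum is bounded by 1 / |sin ((phi (T^m x) - phi x) / 2)|.  By
   aperiodicity this sine is bounded away from 0 outside a set of small measure,
   so on average over t the defect ||B g - g||^2 is at least 3/8 for the
   functions g = cos (t phi), sin (t phi); hence ||B - I|| >= 1/sqrt 5 for every
   K and every choice of the m_i. *)

Section Trigonometry.
Variable R : realType.

Lemma sin_mul_sum_cos (y : R) (M : nat) :
  2 * sin y * \sum_(t < M) cos (t.+1%:R * (2 * y)) =
  sin ((M.*2).+1%:R * y) - sin y.
Proof.
elim: M => [|M IH]; first by rewrite big_ord0 mulr0 /= mul1r subrr.
rewrite big_ord_recr /= mulrDr IH.
have odd_nat (N : nat) : ((N.*2).+1%:R : R) = 2 * N%:R + 1.
  by rewrite -addn1 natrD -muln2 natrM mulrC.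
have succ_nat : (M.+1%:R : R) = M%:R + 1 by rewrite -addn1 natrD.
have -> : (M.*2).+1%:R * y = M.+1%:R * (2 * y) - y.
  by rewrite odd_nat succ_nat; ring.
have -> : (M.+1.*2).+1%:R * y = M.+1%:R * (2 * y) + y.
  by rewrite odd_nat succ_nat; ring.
by rewrite sinB sinD; ring.
Qed.

Lemma norm_sum_cos_le (y : R) (M : nat) : sin y != 0 ->
  `|\sum_(t < M) cos (t.+1%:R * (2 * y))| <= `|sin y|^-1.
Proof.
move=> sin_neq0; have sin_gt0 : 0 < `|sin y| by rewrite normr_gt0.
rewrite -[_^-1]mulr1 ler_pdivlMl // -(@ler_pM2l _ 2) // mulr1 mulrA.
have -> : 2 * `|sin y| = `|2 * sin y| by rewrite normrM ger0_norm.
rewrite -normrM sin_mul_sum_cos.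
apply: (le_trans (ler_normB _ _)); rewrite [2]/(1 + 1).
by apply: lerD; rewrite ler_norml sin_geN1 sin_le1.
Qed.

Lemma mean_cos_sub_le (K : nat) (a : R) (b : 'I_K.+1 -> R) :
  1 - 2 * (K.+1%:R^-1 * \sum_i cos (b i - a)) <=
  (K.+1%:R^-1 * \sum_i cos (b i) - cos a) ^+ 2 +
  (K.+1%:R^-1 * \sum_i sin (b i) - sin a) ^+ 2.
Proof.
have -> : \sum_i cos (b i - a) =
    cos a * \sum_i cos (b i) + sin a * \sum_i sin (b i).
  rewrite !mulr_sumr -big_split /=; apply: eq_bigr => i _.
  by rewrite cosB mulrC (mulrC (sin a)).
set P := K.+1%:R^-1 * \sum_i cos (b i).
set Q := K.+1%:R^-1 * \sum_i sin (b i).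
have -> : K.+1%:R^-1 * (cos a * \sum_i cos (b i) + sin a * \sum_i sin (b i))
  = cos a * P + sin a * Q by rewrite /P /Q; ring.
by have := cos2Dsin2 a; nra.
Qed.

End Trigonometry.

Lemma sum_ge_of_mean_le (R : realType) (K M : nat) (A : 'I_M -> R)
    (C : 'I_M -> 'I_K.+1 -> R) (B : 'I_K.+1 -> R) :
  (forall t, 1 - 2 * (K.+1%:R^-1 * \sum_i C t i) <= A t) ->
  (forall i, \sum_t C t i <= B i) ->
  M%:R - 2 * (K.+1%:R^-1 * \sum_i B i) <= \sum_t A t.
Proof.
move=> CA CB; apply: le_trans (ler_sum _ (fun t _ => CA t)).
rewrite sumrB sumr_const card_ord -mulr_natr mul1r lerD2l lerN2.
rewrite -!mulr_sumr exchange_big /= ler_wpM2l // ler_wpM2l ?invr_ge0 //.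
exact: ler_sum.
Qed.

Lemma le_integral_of_pointwise d (X : measurableType d) (R : realType)
    (mu : probability X R) (f : X -> \bar R) (r : R) :
  measurable_fun setT f -> (forall x, (0 <= f x)%E) ->
  (forall x, (r%:E <= f x)%E) -> (r%:E <= \int[mu]_x f x)%E.
Proof.
move=> mf f_ge0 rf; have [r_ge0|r_lt0] := leP 0 r; last first.
  by apply: le_trans (integral_ge0 _ _); [rewrite lee_fin ltW | move=> x _].
rewrite -[X in (X <= _)%E]mule1 -(probability_setT mu) -integral_cst //.
by apply: ge0_le_integral => //=.
Qed.

Lemma poweR2_le (R : realType) (x y : \bar R) :
  (0 <= x)%E -> (0 <= y)%E -> (x `^ 2 <= y `^ 2)%E = (x <= y)%E.
Proof.
have inI (z : \bar R) : (0 <= z)%E -> z \in `[0%E, +oo%E].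
  by move=> z_ge0; rewrite in_itv /= z_ge0 leey.
move=> x_ge0 y_ge0; apply/idP/idP => [|xy]; last first.
  exact: (gt0_ler_poweR (ler0n _ 2)) (inI _ _) (inI _ _) xy.
have sqrK (z : \bar R) : (0 <= z)%E -> ((z `^ 2) `^ 2^-1)%E = z.
  by move=> z_ge0; rewrite -poweRrM mulfV // poweRe1.
have half_ge0 : (0 : R) <= 2^-1 by rewrite invr_ge0.
move=> /(gt0_ler_poweR half_ge0 (inI _ (poweR_ge0 _ _)) (inI _ (poweR_ge0 _ _))).
by rewrite !sqrK.
Qed.

Lemma Lnorm2_poweR2 d (X : measurableType d) (R : realType)
    (mu : measure X R) (g : X -> R) :
  ('N[mu]_2%:E[EFin \o g] `^ 2 = \int[mu]_x ((g x) ^+ 2)%:E)%E.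
Proof.
rewrite poweR_Lnorm //; apply: eq_integral => x _ /=.
by rewrite powR_mulrn ?normr_ge0 // real_normK // num_real.
Qed.

Lemma integral_scaled_indic d (X : measurableType d) (R : realType)
    (mu : measure X R) (A : set X) (c : R) : measurable A -> 0 <= c ->
  (\int[mu]_x (c * \1_A x)%:E = c%:E * mu A)%E.
Proof.
move=> mA c_ge0; under eq_integral do rewrite EFinM.
rewrite ge0_integralZl_EFin //=; last exact/measurable_EFinP/measurable_indic.
by rewrite integral_indic // setIT.
Qed.

Lemma L2_ball_of_norm_le1 d (X : measurableType d) (R : realType)
    (mu : probability X R) (h : X -> R) :
  measurable_fun setT h -> (forall x, `|h x| <= 1) -> L2_ball mu h.
Proof.
move=> mh h_le1; split => //; rewrite -(@poweR2_le _ _ 1) ?Lnorm_ge0 //.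
rewrite Lnorm2_poweR2 poweR_EFin powR_mulrn // expr1n.
rewrite -(probability_setT mu) -[X in (_ <= X)%E]mul1e -integral_cst //.
apply: ge0_le_integral => //= [x _||x _].
- by rewrite lee_fin sqr_ge0.
- exact/measurable_EFinP/measurable_funX.
- by rewrite lee_fin -real_normK ?num_real // exprn_ile1.
Qed.

Section Aperiodic.
Context d (X : measurableType d) (R : realType) (mu : probability X R)
  (T : X -> X) (phi : X -> R).
Hypothesis mT : measurable_fun setT T.
Hypothesis mphi : measurable_fun setT phi.
Hypothesis phi_inj : injective phi.
Hypothesis phi_bounded : forall x, - (pi / 2) < phi x < pi / 2.
Hypothesis aperT : aperiodic mu T.

Lemma measurable_iter m : measurable_fun setT (iter m T).
Proof.
elim: m => [|m IH] /=; first exact: measurable_id.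
exact: measurableT_comp mT IH.
Qed.

Definition phase_gap m x := (phi (iter m T x) - phi x) / 2.

Definition almost_return m (e : R) := [set x | `|sin (phase_gap m x)| < e].

Lemma measurable_almost_return m e : measurable (almost_return m e).
Proof.
have mgap : measurable_fun setT (phase_gap m).
  apply: measurable_funM => //; apply: measurable_funB => //.
  exact: measurableT_comp mphi (measurable_iter m).
have msin : measurable_fun setT (@sin R).
  exact: continuous_measurable_fun (@continuous_sin R).
have mnorm := measurableT_comp (@normr_measurable R setT)
  (measurableT_comp msin mgap).
have := mnorm measurableT _ (measurable_itv `]-oo, e[).
by rewrite setTI; congr measurable; apply/seteqP; split => x /=; rewrite in_itv.
Qed.

Lemma almost_return_subset m e e' :
  e <= e' -> almost_return m e `<=` almost_return m e'.
Proof. by move=> ee' x /= /lt_le_trans; apply. Qed.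

(* Since phi takes values in ]-pi/2, pi/2[, the half phase gap lies in
   ]-pi/2, pi/2[, where sin vanishes only at 0. *)
Lemma sin_phase_gap_eq0 m x :
  (0 < m)%N -> sin (phase_gap m x) = 0 -> periodic_points T x.
Proof.
move=> m_gt0; rewrite /phase_gap; set y := (_ - _) / 2 => sin_y0.
have y_bounded : - (pi / 2) < y < pi / 2.
  have /andP[? ?] := phi_bounded x.
  have /andP[? ?] := phi_bounded (iter m T x).
  by apply/andP; split; rewrite /y; lra.
have pi_gt0 := pi_gt0 R.
have y0 : y = 0.
  move: y_bounded => /andP[? ?]; case: (ltgtP y 0) => // y_sign.
  - have : 0 < sin (- y) by apply: sin_gt0_pi; apply/andP; split; lra.
    by rewrite sinN sin_y0 oppr0 ltxx.
  - have : 0 < sin y by apply: sin_gt0_pi; apply/andP; split; lra.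
    by rewrite sin_y0 ltxx.
by exists m; split => //; apply: phi_inj; move: y0; rewrite /y; lra.
Qed.

(* The sets almost_return m (1/(j+1)) decrease to the zero set of
   sin (phase_gap m), which consists of periodic points. *)
Lemma almost_return_small m : (0 < m)%N ->
  exists j : nat, (mu (almost_return m j.+1%:R^-1) <= (16^-1)%:E)%E.
Proof.
move=> m_gt0; pose F j := almost_return m j.+1%:R^-1.
have mF j : measurable (F j) by exact: measurable_almost_return.
have F_decr : nonincreasing_seq F.
  move=> a b ab; rewrite subsetEset; apply: almost_return_subset.
  by rewrite lef_pV2 ?posrE ?ltr0Sn // ler_nat ltnS.
have bigcapF0 : \bigcap_j F j `<=` [set x | sin (phase_gap m x) = 0].
  move=> x Fx /=; apply/eqP; apply/negPn/negP => sin_neq0.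
  have := Fx (Num.truncn `|sin (phase_gap m x)|^-1) I; rewrite /F /almost_return /=.
  rewrite -[`|sin _|]invrK ltf_pV2 ?posrE ?invr_gt0 ?normr_gt0 //.
  by move=> /lt_trans /(_ (truncnS_gt _)); rewrite invrK ltxx.
have [N [mN muN0 periodicN]] := aperT.
have mu_bigcapF0 : mu (\bigcap_j F j) = 0.
  apply/eqP; rewrite eq_le measure_ge0 andbT -muN0.
  apply: le_measure; rewrite ?inE //; first exact: bigcapT_measurable.
  by move=> x /bigcapF0 /sin_phase_gap_eq0 periodic_x; exact/periodicN/periodic_x.
have : mu \o F @ \oo --> 0%E.
  rewrite -mu_bigcapF0; apply: nonincreasing_cvg_mu => //.
  - exact: le_lt_trans (probability_le1 _ (mF 0%N)) (ltry _).
  - exact: bigcapT_measurable.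
have small_nbhs0 : nbhs (0%E : \bar R) (fun u => u < (16^-1)%:E)%E.
  by apply: open_ereal_lt'; rewrite lte_fin invr_gt0.
move=> /(_ _ small_nbhs0) [J _ muFJ].
by exists J; apply/ltW/(muFJ J); rewrite /= leqnn.
Qed.

Lemma almost_return_small_uniform (K : nat) (m : nat -> nat) :
  (forall i, (0 < m i)%N) -> exists J : nat,
  forall i : 'I_K.+1, (mu (almost_return (m i) J.+1%:R^-1) <= (16^-1)%:E)%E.
Proof.
move=> m_gt0; have [j muj] := choice (fun i => almost_return_small (m_gt0 i)).
exists (\max_(i < K.+1) j i) => i; apply: le_trans (muj i).
apply: le_measure; rewrite ?inE; try exact: measurable_almost_return.
apply: almost_return_subset; rewrite lef_pV2 ?posrE ?ltr0Sn // ler_nat ltnS.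
exact: leq_bigmax.
Qed.

Lemma sum_cos_phase_gap_le m (eta : R) (M : nat) x : 0 < eta ->
  \sum_(t < M) cos (t.+1%:R * (2 * phase_gap m x))
    <= M%:R * \1_(almost_return m eta) x + eta^-1.
Proof.
move=> eta_gt0; have etaV_gt0 : 0 < eta^-1 by rewrite invr_gt0.
rewrite indicE; case: (boolP (x \in almost_return m eta)) => [_|].
  have : \sum_(t < M) cos (t.+1%:R * (2 * phase_gap m x)) <= \sum_(t < M) 1.
    by apply: ler_sum => t _; exact: cos_le1.
  by rewrite sumr_const card_ord mulr1; lra.
move=> /negP x_notin; rewrite mulr0 add0r.
have eta_le : eta <= `|sin (phase_gap m x)|.
  by rewrite leNgt; apply/negP => lt_eta; apply: x_notin; rewrite in_setE.
have sin_neq0 : sin (phase_gap m x) != 0.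
  by rewrite -normr_gt0; exact: lt_le_trans eta_le.
apply: le_trans (ler_norm _) _; apply: le_trans (norm_sum_cos_le M sin_neq0) _.
by rewrite lef_pV2 ?posrE ?normr_gt0.
Qed.

Definition harmonic (t : nat) x := t.+1%:R * phi x.

Definition cesaro_deviation K m (h : X -> R) x :=
  (cesaro_koopman T m K h x - h x) ^+ 2.

Definition cesaro_defect K m (h : X -> R) :=
  (\int[mu]_x (cesaro_deviation K m h x)%:E)%E.

Lemma sum_cesaro_deviation_ge K m (M : nat) (eta : R) x : 0 < eta ->
  M%:R - 2 * eta^-1 <=
  \sum_(t < M) (cesaro_deviation K m (cos \o harmonic t) x +
                cesaro_deviation K m (sin \o harmonic t) x) +
  \sum_(i < K.+1) (2 * M%:R / K.+1%:R) * \1_(almost_return (m i) eta) x.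
Proof.
move=> eta_gt0.
pose C t (i : 'I_K.+1) := cos (t.+1%:R * (2 * phase_gap (m i) x)).
have mean_le t : 1 - 2 * (K.+1%:R^-1 * \sum_i C t i) <=
    cesaro_deviation K m (cos \o harmonic t) x +
    cesaro_deviation K m (sin \o harmonic t) x.
  have -> : \sum_i C t i =
      \sum_(i < K.+1) cos (harmonic t (iter (m i) T x) - harmonic t x).
    by apply: eq_bigr => i _; rewrite /C /phase_gap /harmonic; congr cos; field.
  exact: mean_cos_sub_le.
have := sum_ge_of_mean_le mean_le (fun i : 'I_K.+1 => sum_cos_phase_gap_le (m i) M x eta_gt0).
rewrite big_split /= -!mulr_sumr sumr_const card_ord -[eta^-1 *+ _]mulr_natr.
set S := \sum_(i < K.+1) \1_(almost_return (m i) eta) x.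
have eta_neq0 : eta != 0 by rewrite gt_eqF.
have -> : K.+1%:R^-1 * (M%:R * S + eta^-1 * K.+1%:R) =
    M%:R / K.+1%:R * S + eta^-1.
  by field; rewrite eta_neq0 nat1r pnatr_eq0.
have -> : 2 * M%:R / K.+1%:R * S = 2 * (M%:R / K.+1%:R * S) by rewrite !mulrA.
move=> deviation_ge; rewrite -lerBlDr; apply: le_trans deviation_ge.
by set a := M%:R / K.+1%:R * S; lra.
Qed.

Lemma measurable_cesaro_deviation K m h :
  measurable_fun setT h -> measurable_fun setT (cesaro_deviation K m h).
Proof.
move=> mh; apply: measurable_funX; apply: measurable_funB => //.
apply: measurable_funM => //; apply: measurable_sum => i.
exact: measurableT_comp mh (measurable_iter _).
Qed.

Lemma measurable_comp_harmonic (f : R -> R) (t : nat) :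
  measurable_fun setT f -> measurable_fun setT (f \o harmonic t).
Proof. by move=> mf; apply: measurableT_comp mf _; exact: measurable_funM. Qed.

Lemma sum_cesaro_defect_ge K m (M : nat) (eta : R) : 0 < eta ->
  ((M%:R - 2 * eta^-1)%:E <=
   \sum_(t < M) (cesaro_defect K m (cos \o harmonic t) +
                 cesaro_defect K m (sin \o harmonic t)) +
   \sum_(i < K.+1) (2 * M%:R / K.+1%:R)%:E * mu (almost_return (m i) eta))%E.
Proof.
move=> eta_gt0; set c := 2 * M%:R / K.+1%:R.
have c_ge0 : 0 <= c by rewrite /c divr_ge0 // mulr_ge0.
pose dev t x := (cesaro_deviation K m (cos \o harmonic t) x)%:E +
                (cesaro_deviation K m (sin \o harmonic t) x)%:E.
pose ind i x := (c * \1_(almost_return (m i) eta) x)%:E.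
have mdev_comp (f : R -> R) t : measurable_fun setT f ->
    measurable_fun setT (fun x => (cesaro_deviation K m (f \o harmonic t) x)%:E).
  move=> mf; apply/measurable_EFinP.
  exact/measurable_cesaro_deviation/measurable_comp_harmonic.
have mcos := continuous_measurable_fun (@continuous_cos R).
have msin := continuous_measurable_fun (@continuous_sin R).
have mdev t : measurable_fun setT (dev t).
  by apply: emeasurable_funD; apply: mdev_comp.
have mind i : measurable_fun setT (ind i).
  apply/measurable_EFinP; apply: measurable_funM => //.
  exact/measurable_indic/measurable_almost_return.
have dev_ge0 t x : (0 <= dev t x)%E by rewrite adde_ge0 // lee_fin sqr_ge0.
have ind_ge0 i x : (0 <= ind i x)%E by rewrite lee_fin mulr_ge0.
have := @le_integral_of_pointwise _ _ _ mu
  (fun x => \sum_(t < M) dev t x + \sum_(i < K.+1) ind i x)%E (M%:R - 2 * eta^-1).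
rewrite ge0_integralD //; first last.
- by apply: emeasurable_sum => i; exact: mind.
- by move=> x _; apply: sume_ge0.
- by apply: emeasurable_sum => t; exact: mdev.
- by move=> x _; apply: sume_ge0.
have int_dev t : (\int[mu]_x dev t x = cesaro_defect K m (cos \o harmonic t) +
    cesaro_defect K m (sin \o harmonic t))%E.
  by rewrite ge0_integralD // => [x _||x _|]; rewrite ?lee_fin ?sqr_ge0 //;
    exact: mdev_comp.
have int_ind i : (\int[mu]_x ind i x = c%:E * mu (almost_return (m i) eta))%E.
  exact/integral_scaled_indic/c_ge0/measurable_almost_return.
rewrite !ge0_integral_sum // (eq_bigr _ (fun (t : 'I_M) _ => int_dev t)).
rewrite (eq_bigr _ (fun (i : 'I_K.+1) _ => int_ind i)); apply.
- by apply: emeasurable_funD; apply: emeasurable_sum.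
- by move=> x; apply: adde_ge0; apply: sume_ge0.
- move=> x; rewrite /dev /ind; under eq_bigr do rewrite -EFinD.
  by rewrite !sumEFin -EFinD lee_fin; exact: sum_cesaro_deviation_ge.
Qed.

Lemma exists_large_cesaro_defect K m : (forall i, (0 < m i)%N) ->
  exists h : X -> R, [/\ measurable_fun setT h, (forall x, `|h x| <= 1) &
    ((5^-1)%:E <= cesaro_defect K m h)%E].
Proof.
move=> m_gt0; have [J muE] := almost_return_small_uniform K m_gt0.
(* With these choices sum_cesaro_defect_ge bounds the 2M defects from below
   by 7M/8 - M/8 in total, so not all of them can be below 1/5. *)
pose M := (16 * J.+1)%N; pose eta : R := J.+1%:R^-1.
have [[t [large|large]]|small] := pselect (exists t : 'I_M,
    ((5^-1)%:E <= cesaro_defect K m (cos \o harmonic t))%E \/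
    ((5^-1)%:E <= cesaro_defect K m (sin \o harmonic t))%E).
- exists (cos \o harmonic t); split => // [|x].
    exact: measurable_comp_harmonic (continuous_measurable_fun (@continuous_cos R)).
  by rewrite ler_norml cos_geN1 cos_le1.
- exists (sin \o harmonic t); split => // [|x].
    exact: measurable_comp_harmonic (continuous_measurable_fun (@continuous_sin R)).
  by rewrite ler_norml sin_geN1 sin_le1.
exfalso; pose c : R := 2 * M%:R / K.+1%:R.
have c_ge0 : 0 <= c by rewrite /c divr_ge0 // mulr_ge0.
have defect_le (t : 'I_M) : (cesaro_defect K m (cos \o harmonic t) +
    cesaro_defect K m (sin \o harmonic t) <= (2 / 5 : R)%:E)%E.
  have -> : (2 / 5 : R) = 5^-1 + 5^-1 by field.
  by rewrite EFinD; apply: leeD; rewrite leNgt; apply/negP => ?; apply: small;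
    exists t; [left|right]; apply: ltW.
have eta_gt0 : 0 < eta by rewrite invr_gt0 ltr0Sn.
have sum_le1 : (\sum_(t < M) (cesaro_defect K m (cos \o harmonic t) +
    cesaro_defect K m (sin \o harmonic t)) <= \sum_(t < M) (2 / 5 : R)%:E)%E.
  by apply: lee_sum => t _; exact: defect_le.
have sum_le2 : (\sum_(i < K.+1) c%:E * mu (almost_return (m i) eta) <=
    \sum_(i < K.+1) (c / 16)%:E)%E.
  apply: lee_sum => i _; rewrite [(c / 16)%:E]EFinM.
  by apply: lee_wpmul2l; [rewrite lee_fin | exact: muE].
have := le_trans (sum_cesaro_defect_ge K m M eta_gt0) (leeD sum_le1 sum_le2).
rewrite !sumEFin -EFinD lee_fin !sumr_const !card_ord.
rewrite -[_ *+ M]mulr_natl -[_ *+ K.+1]mulr_natl /c /eta invrK.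
have K1_neq0 : K.+1%:R != 0 :> R by rewrite pnatr_eq0.
have -> : K.+1%:R * (2 * M%:R / K.+1%:R / 16) = M%:R / 8 :> R by field.
have : 0 < M%:R :> R by rewrite ltr0n muln_gt0.
by rewrite /M natrM; lra.
Qed.

Lemma cesaro_koopman_dist_id_ge K m : (forall i, (0 < m i)%N) ->
  ((3^-1)%:E <= opnorm_dist_id mu (cesaro_koopman T m K))%E.
Proof.
move=> m_gt0; have [h [mh h_le1 defect_ge]] := exists_large_cesaro_defect K m_gt0.
have dist_le : ('N[mu]_2%:E[EFin \o (cesaro_koopman T m K h \- h)%R] <=
    opnorm_dist_id mu (cesaro_koopman T m K))%E.
  by apply: ereal_sup_ubound; exists h => //; exact: L2_ball_of_norm_le1.
apply: le_trans dist_le; rewrite -poweR2_le ?Lnorm_ge0 // Lnorm2_poweR2.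
rewrite poweR_EFin powR_mulrn //; apply: le_trans defect_ge; rewrite lee_fin.
by rewrite expr2 -invfM lef_pV2 ?posrE //; lra.
Qed.

End Aperiodic.

Theorem mainTheorem5 (d : measure_display) (X : measurableType d) (R : realType)
    (mu : probability X R) (T : X -> X) (n : nat -> nat) :
  standard_borel X R ->
  invertible_mpt mu T ->
  aperiodic mu T ->
  (forall k, (0 < n k)%N) ->
  (forall M : nat, exists K : nat, forall k, (K <= k)%N -> (M <= n k)%N) ->
  ~ ((fun k => opnorm_dist_id mu (koopman_pow T (n k))) @ \oo --> 0%E) /\
  ~ ((fun k => opnorm_dist_id mu (cesaro_koopman T n k)) @ \oo --> 0%E).
Proof.
move=> [f [f_inj [mf _]]] [mT _] aperT n_gt0 _.
pose phi := atan \o f.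
have mphi : measurable_fun setT phi.
  exact: measurableT_comp (continuous_measurable_fun (@continuous_atan R)) mf.
have phi_inj : injective phi by move=> x y /(can_inj (@atanK R)) /f_inj.
have phi_bounded x : - (pi / 2) < phi x < pi / 2 by rewrite atan_gtNpi2 atan_ltpi2.
have dist_ge := cesaro_koopman_dist_id_ge mT mphi phi_inj phi_bounded aperT.
have koopman_cesaro k :
    koopman_pow T (n k) = cesaro_koopman T (fun=> n k) 0 :> ((X -> R) -> X -> R).
  by apply/funext => h; apply/funext => x; rewrite /cesaro_koopman big_ord1 invr1 mul1r.
have not_cvg0 (u : nat -> \bar R) : (forall k, ((3^-1)%:E <= u k)%E) ->
    ~ (u @ \oo --> 0%E).
  move=> u_ge u_cvg0; have := cvge_to_ge u_cvg0 (nearW eventually_filter u_ge).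
  by move=> /(_ eventually_filter); rewrite lee_fin leNgt invr_gt0 ltr0n.
split; apply: not_cvg0 => k; last exact: dist_ge.
by rewrite koopman_cesaro; apply: dist_ge.
Qed.
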